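(* Let $p$ be an odd prime and $\chi$ a primitive Dirichlet character with odd conductor $f$. For every integer $n\ge0$, in $\mathbb Q_p(\chi)$, $$(1-\chi(p)p^n)E_{n,\chi}=\lim_{N\to\infty}\sum_{\substack{a=1\\ p\nmid a}}^{fp^N}(-1)^a\chi(a)a^n .$$
   Context: We set $\chi(a)=0$ if $a$ is not prime to $f$. The generalized Euler numbers are defined by $2\sum_{a=1}^{f}\frac{(-1)^a\chi(a)e^{at}}{e^{ft}+1}=\sum_{n\ge0}E_{n,\chi}\frac{t^n}{n!}$, viewed in $\mathbb Q_p(\chi)$, the field generated over $\mathbb Q_p$ by the values of $\chi$. *)

From HB Require Import structures.
From mathcomp Require Import all_boot all_order all_algebra all_field.
Set Implicit Arguments. Unset Strict Implicit. Unset Printing Implicit Defensive.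
Import Order.TTheory GRing.Theory Num.Theory.
Local Open Scope ring_scope.

Definition dirichlet_char (f : nat) (chi : nat -> algC) : Prop :=
  [/\ chi 1%N = 1,
      (forall m n : nat, chi (m * n)%N = chi m * chi n),
      (forall a : nat, chi (a + f)%N = chi a) &
      (forall a : nat, (chi a != 0) = coprime a f)].

(* Primitive: not induced by a character of a smaller modulus d | f. *)
Definition primitive_char (f : nat) (chi : nat -> algC) : Prop :=
  dirichlet_char f chi /\
  forall d : nat, (d %| f)%N -> (d < f)%N ->
    exists a b : nat,
      [/\ coprime a f, coprime b f, a = b %[mod d] & chi a != chi b].

(* E is the sequence of generalized Euler numbers: coefficientwise form of
   (e^{ft}+1) * sum_n E n t^n/n! = 2 sum_{a=1}^f (-1)^a chi(a) e^{at}. *)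
Definition gen_euler (f : nat) (chi : nat -> algC) (E : nat -> algC) : Prop :=
  forall n : nat,
    \sum_(k < n.+1) ('C(n, k))%:R * (f%:R) ^+ (n - k) * E k + E n =
    2 * \sum_(1 <= a < f.+1) (-1) ^+ a * chi a * (a%:R) ^+ n.

(* x is integral at every prime above p. *)
Definition p_integral (p : nat) (x : algC) : Prop :=
  exists m : nat, coprime m p /\ (m%:R * x \in Aint).

(* p-adic convergence (at every prime above p) of u to L. *)
Definition padic_lim (p : nat) (u : nat -> algC) (L : algC) : Prop :=
  forall k : nat, exists N0 : nat, forall N : nat, (N0 <= N)%N ->
    p_integral p ((u N - L) / (p%:R) ^+ k).

From HB Require Import structures.
From mathcomp Require Import all_boot all_order all_algebra all_field.
From mathcomp Require Import cyclic ring zify.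
Import Order.TTheory GRing.Theory Num.Theory.
Set Implicit Arguments. Unset Strict Implicit.
Local Open Scope ring_scope.

(* Write S_M = sum_{a <= M} (-1)^a chi(a) a^n.  Comparing exponential generating
   functions, 2 sum_{a <= f m} (-1)^a chi(a) e^{at} = E(t) (1 + e^{f m t}) for odd m,
   so S_{fm} - E_n = 1/2 sum_{k<n} C(n,k) E_k (f m)^(n-k), which is divisible by m
   because the E_k are p-integral (p is odd).  Hence S_{f p^M} tends p-adically to E_n.
   Removing the multiples of p from the sum over a <= f p^(N+1) subtracts exactly
   chi(p) p^n S_{f p^N}, and the limit follows. *)

Section DirichletCharacter.
Variables (f : nat) (chi : nat -> algC).
Hypothesis chi_dirichlet : dirichlet_char f chi.

Lemma chiDMn a q : chi (a + q * f)%N = chi a.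
Proof.
have [_ _ chiDf _] := chi_dirichlet.
elim: q => [|q IHq]; first by rewrite mul0n addn0.
by rewrite mulSn addnCA addnC chiDf IHq.
Qed.

Lemma chi_modn a : chi a = chi (a %% f).
Proof. by rewrite {1}(divn_eq a f) addnC chiDMn. Qed.

Lemma chiXn a k : chi (a ^ k)%N = chi a ^+ k.
Proof.
have [chi1 chiM _ _] := chi_dirichlet.
by elim: k => [|k IHk]; rewrite ?expn0 ?chi1 // expnS chiM IHk exprS.
Qed.

Lemma chi_Aint a : chi a \in Aint.
Proof.
have [chi1 _ _ chi_eq0] := chi_dirichlet.
have [->|chia_neq0] := eqVneq (chi a) 0; first exact: rpred0.
have coprime_af : coprime a f by rewrite -chi_eq0.
have [f0|f_gt0] := posnP f.
  by move: coprime_af; rewrite f0 /coprime gcdn0 => /eqP ->; rewrite chi1 rpred1.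
apply: (@Aint_unity_root (totient f)); first by rewrite totient_gt0.
by rewrite unity_rootE -chiXn chi_modn (Euler_exp_totient coprime_af) -chi_modn chi1.
Qed.

End DirichletCharacter.

Section PIntegral.
Variable p : nat.

Lemma p_integral_Aint x : x \in Aint -> p_integral p x.
Proof. by move=> Ax; exists 1%N; rewrite coprime1n mul1r. Qed.

Lemma p_integral_nat m : p_integral p m%:R.
Proof. by apply: p_integral_Aint; rewrite rpred_nat. Qed.

Lemma p_integralN x : p_integral p x -> p_integral p (- x).
Proof. by move=> [m [cop_mp Amx]]; exists m; rewrite mulrN rpredN. Qed.

Lemma p_integralD x y : p_integral p x -> p_integral p y -> p_integral p (x + y).
Proof.
move=> [m1 [cop1 Ax]] [m2 [cop2 Ay]]; exists (m1 * m2)%N.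
split; first by rewrite coprimeMl cop1 cop2.
have -> : (m1 * m2)%:R * (x + y) = m2%:R * (m1%:R * x) + m1%:R * (m2%:R * y).
  by rewrite natrM; ring.
by rewrite rpredD // rpredM // rpred_nat.
Qed.

Lemma p_integralB x y : p_integral p x -> p_integral p y -> p_integral p (x - y).
Proof. by move=> px py; apply/p_integralD/p_integralN. Qed.

Lemma p_integralM x y : p_integral p x -> p_integral p y -> p_integral p (x * y).
Proof.
move=> [m1 [cop1 Ax]] [m2 [cop2 Ay]]; exists (m1 * m2)%N.
split; first by rewrite coprimeMl cop1 cop2.
have -> : (m1 * m2)%:R * (x * y) = (m1%:R * x) * (m2%:R * y) by rewrite natrM; ring.
exact: rpredM.
Qed.

Lemma p_integral_sum (I : Type) (r : seq I) (P : pred I) (F : I -> algC) :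
  (forall i, P i -> p_integral p (F i)) -> p_integral p (\sum_(i <- r | P i) F i).
Proof.
move=> pF; apply: (big_ind (p_integral p)) => //; first exact: (p_integral_nat 0).
exact: p_integralD.
Qed.

Lemma p_integral_inv2 : odd p -> p_integral p 2^-1.
Proof.
move=> p_odd; exists 2%N; split; first by rewrite coprime2n.
by rewrite mulfV ?rpred1 // pnatr_eq0.
Qed.

Lemma padic_lim_eq_ge (u v : nat -> algC) L N1 :
  (forall N, (N1 <= N)%N -> u N = v N) -> padic_lim p v L -> padic_lim p u L.
Proof.
move=> eq_uv lim_v k; have [N0 hN0] := lim_v k; exists (maxn N0 N1) => N.
by rewrite geq_max => /andP[N0N N1N]; rewrite eq_uv //; apply: hN0.
Qed.

Lemma padic_lim_pred (u : nat -> algC) L :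
  padic_lim p u L -> padic_lim p (fun N => u N.-1) L.
Proof.
move=> lim_u k; have [N0 hN0] := lim_u k; exists N0.+1 => N N0N.
by apply: hN0; rewrite -ltnS (leq_trans N0N) // leqSpred.
Qed.

Lemma padic_limB (u v : nat -> algC) L M :
  padic_lim p u L -> padic_lim p v M -> padic_lim p (fun N => u N - v N) (L - M).
Proof.
move=> lim_u lim_v k; have [N0 hu] := lim_u k; have [N1 hv] := lim_v k.
exists (maxn N0 N1) => N; rewrite geq_max => /andP[N0N N1N].
have -> : (u N - v N - (L - M)) / p%:R ^+ k =
          (u N - L) / p%:R ^+ k - (v N - M) / p%:R ^+ k by ring.
exact: p_integralB (hu _ N0N) (hv _ N1N).
Qed.

Lemma padic_limMl c (u : nat -> algC) L : p_integral p c ->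
  padic_lim p u L -> padic_lim p (fun N => c * u N) (c * L).
Proof.
move=> pc lim_u k; have [N0 hu] := lim_u k; exists N0 => N N0N.
rewrite -mulrBr -mulrA; exact: p_integralM pc (hu _ N0N).
Qed.

End PIntegral.

Section TruncatedEgf.
Variable n : nat.

Definition egf (s : nat -> algC) : {poly algC} := \poly_(i < n.+1) (s i / (i`!)%:R).

Definition egf_exp (x : algC) := egf (fun i => x ^+ i).

Definition eq_upto (P Q : {poly algC}) := forall i, (i <= n)%N -> P`_i = Q`_i.

Definition binomial_conv (a b : nat -> algC) i :=
  \sum_(j < i.+1) ('C(i, j))%:R * a j * b (i - j)%N.

Lemma eq_upto_refl P : eq_upto P P. Proof. by []. Qed.

Lemma eq_upto_sym P Q : eq_upto P Q -> eq_upto Q P.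
Proof. by move=> PQ i le_in; rewrite PQ. Qed.

Lemma eq_upto_trans P Q R : eq_upto P Q -> eq_upto Q R -> eq_upto P R.
Proof. by move=> PQ QR i le_in; rewrite PQ // QR. Qed.

Lemma eq_uptoN P Q : eq_upto P Q -> eq_upto (- P) (- Q).
Proof. by move=> PQ i le_in; rewrite !coefN PQ. Qed.

Lemma eq_uptoD P Q P' Q' : eq_upto P P' -> eq_upto Q Q' -> eq_upto (P + Q) (P' + Q').
Proof. by move=> PP' QQ' i le_in; rewrite !coefD PP' // QQ'. Qed.

Lemma eq_uptoM P Q P' Q' : eq_upto P P' -> eq_upto Q Q' -> eq_upto (P * Q) (P' * Q').
Proof.
move=> PP' QQ' i le_in; rewrite !coefM; apply: eq_bigr => j _.
by rewrite PP' ?QQ' // (leq_trans _ le_in) // ?leq_subr // -ltnS.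
Qed.

Lemma eq_upto_sum (I : Type) (r : seq I) (F G : I -> {poly algC}) :
  (forall x, eq_upto (F x) (G x)) -> eq_upto (\sum_(x <- r) F x) (\sum_(x <- r) G x).
Proof. by move=> FG i le_in; rewrite !coef_sum; apply: eq_bigr => x _; apply: FG. Qed.

Lemma fact_neq0 k : (k`!)%:R != 0 :> algC.
Proof. by rewrite pnatr_eq0 -lt0n fact_gt0. Qed.

Lemma coef_egfM a b i : (i <= n)%N ->
  (egf a * egf b)`_i = binomial_conv a b i / (i`!)%:R.
Proof.
move=> le_in; rewrite coefM /binomial_conv mulr_suml; apply: eq_bigr => j _.
have le_ji : (j <= i)%N by rewrite -ltnS.
rewrite !coef_poly !ltnS (leq_trans le_ji) // (leq_trans (leq_subr _ _)) //.
rewrite -(bin_fact le_ji) !natrM; field.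
by rewrite !fact_neq0 pnatr_eq0 -lt0n bin_gt0.
Qed.

Lemma binomial_conv_exp x y i :
  binomial_conv (fun k => x ^+ k) (fun k => y ^+ k) i = (x + y) ^+ i.
Proof.
rewrite addrC exprDn /binomial_conv; apply: eq_bigr => j _.
by rewrite -mulr_natl; ring.
Qed.

Lemma egf_expD x y : eq_upto (egf_exp x * egf_exp y) (egf_exp (x + y)).
Proof. by move=> i le_in; rewrite coef_egfM // binomial_conv_exp coef_poly ltnS le_in. Qed.

Lemma egf_exp0 : eq_upto (egf_exp 0) 1.
Proof.
move=> i le_in; rewrite coef_poly ltnS le_in coefC expr0n.
by case: i {le_in} => [|i] /=; rewrite ?divr1 ?mul0r.
Qed.

End TruncatedEgf.

Section EulerNumbers.
Variables (f n : nat) (chi : nat -> algC) (E : nat -> algC).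
Hypotheses (chi_dirichlet : dirichlet_char f chi) (f_odd : odd f)
  (E_euler : gen_euler f chi E).

Definition sign_chi_egf M :=
  \sum_(1 <= a < M.+1) ((-1) ^+ a * chi a)%:P * egf_exp n a%:R.

Definition alt_sum M := \sum_(1 <= a < M.+1) (-1) ^+ a * chi a * (a%:R) ^+ n.

Definition euler_tail m := \sum_(k < n) ('C(n, k))%:R * E k * ((f * m)%:R) ^+ (n - k).

Lemma coef_sign_chi_egf M i : (i <= n)%N ->
  (sign_chi_egf M)`_i = (\sum_(1 <= a < M.+1) (-1) ^+ a * chi a * (a%:R) ^+ i) / (i`!)%:R.
Proof.
move=> le_in; rewrite coef_sum mulr_suml; apply: eq_bigr => a _.
by rewrite coefCM coef_poly ltnS le_in mulrA.
Qed.

Lemma sign_chi_egf_f : eq_upto n (2%:P * sign_chi_egf f) (egf n E * (egf_exp n f%:R + 1)).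
Proof.
move=> i le_in; rewrite coefCM coef_sign_chi_egf // mulrDr mulr1 coefD coef_egfM //.
rewrite coef_poly ltnS le_in -mulrDl mulrA -E_euler.
by congr ((_ + _) / _); apply: eq_bigr => k _; ring.
Qed.

Lemma sign_chi_egf_step j : eq_upto n (sign_chi_egf (f * j.+1))
  (sign_chi_egf (f * j) + ((-1) ^+ j)%:P * (egf_exp n (f * j)%:R * sign_chi_egf f)).
Proof.
rewrite /sign_chi_egf (@big_cat_nat _ _ _ (f * j).+1) //=; last first.
  by rewrite ltnS leq_mul2l leqnSn orbT.
apply: eq_uptoD; first exact: eq_upto_refl.
rewrite -add1n big_addn mulnS -addSn addnK !mulr_sumr.
apply: eq_upto_sum => a.
have -> : ((-1) ^+ j)%:P * (egf_exp n (f * j)%:R *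
            (((-1) ^+ a * chi a)%:P * egf_exp n a%:R)) =
          ((-1) ^+ (a + f * j) * chi (a + f * j)%N)%:P *
            (egf_exp n a%:R * egf_exp n (f * j)%:R).
  have -> : chi (a + f * j)%N = chi a by rewrite mulnC chiDMn.
  rewrite exprD exprM.
  by rewrite -[(-1) ^+ f](signr_odd _ f) f_odd expr1 !polyCM; ring.
by apply: eq_uptoM; [exact: eq_upto_refl | rewrite natrD; exact/eq_upto_sym/egf_expD].
Qed.

(* Truncated form of 2 sum_{a <= fj} (-1)^a chi(a) e^{at} = E(t) (1 - (-1)^j e^{fjt}),
   obtained by telescoping the defining identity of E over the j periods. *)
Lemma sign_chi_egf_mulf j : eq_upto n (2%:P * sign_chi_egf (f * j))
  (egf n E * (1 - ((-1) ^+ j)%:P * egf_exp n (f * j)%:R)).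
Proof.
elim: j => [|j IHj].
  rewrite muln0 /sign_chi_egf big_geq // mulr0 expr0 mul1r.
  apply: eq_upto_sym; apply: eq_upto_trans (_ : eq_upto n (egf n E * (1 - 1)) _).
    by apply/eq_uptoM/eq_uptoD/eq_uptoN/egf_exp0; apply: eq_upto_refl.
  by rewrite subrr mulr0; apply: eq_upto_refl.
apply: eq_upto_trans (eq_uptoM (@eq_upto_refl n 2%:P) (sign_chi_egf_step j)) _.
set s := ((-1) ^+ j)%:P; set X := egf_exp n (f * j)%:R.
apply: eq_upto_trans
  (_ : eq_upto n (egf n E * (1 - s * X) + s * X * (egf n E * (egf_exp n f%:R + 1))) _).
  rewrite mulrDr; apply: eq_uptoD => //.
  have -> : 2%:P * (s * (X * sign_chi_egf f)) = s * X * (2%:P * sign_chi_egf f) by ring.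
  exact/eq_uptoM/sign_chi_egf_f/eq_upto_refl.
have -> : egf n E * (1 - s * X) + s * X * (egf n E * (egf_exp n f%:R + 1)) =
          egf n E * (1 + s * (X * egf_exp n f%:R)) by ring.
apply/eq_uptoM/eq_uptoD; [exact: eq_upto_refl | exact: eq_upto_refl |].
rewrite exprS mulN1r polyCN mulNr opprK.
apply/eq_uptoM; first exact: eq_upto_refl.
by rewrite mulnS addnC natrD; apply: egf_expD.
Qed.

Lemma alt_sum_mulf_odd m : odd m -> alt_sum (f * m) - E n = 2^-1 * euler_tail m.
Proof.
move=> m_odd; have := sign_chi_egf_mulf m (leqnn n).
rewrite coefCM coef_sign_chi_egf // -signr_odd m_odd expr1 polyCN mulN1r opprK.
rewrite mulrDr mulr1 coefD coef_egfM // coef_poly ltnSn -mulrDl -/(alt_sum _).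
rewrite /binomial_conv big_ord_recr /= binn subnn expr0 mulr1 mul1r -/(euler_tail m).
rewrite mulrA => /(mulIf (invr_neq0 (fact_neq0 n))) twice_alt_sum.
have two_neq0 : 2 != 0 :> algC by rewrite pnatr_eq0.
by apply: (mulfI two_neq0); rewrite mulrBr twice_alt_sum; field.
Qed.

End EulerNumbers.

Section MultiplesSplit.
Variables (p : nat) (g : nat -> algC).
Hypothesis p_gt0 : (0 < p)%N.

Lemma big_nat_dvd M :
  \sum_(1 <= a < (p * M).+1 | (p %| a)%N) g a = \sum_(1 <= b < M.+1) g (p * b)%N.
Proof.
elim: M => [|M IHM]; first by rewrite muln0 !big_geq.
rewrite big_nat_recr //= -IHM (@big_cat_nat _ _ _ (p * M).+1) //=; last first.
  by rewrite ltnS leq_mul2l leqnSn orbT.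
congr (_ + _); rewrite big_mkcond big_nat_recr /=; last by rewrite mulnS; lia.
rewrite dvdn_mulr // big1_seq ?add0r // => a /andP[_].
rewrite mem_index_iota => /andP[lt_pM_a le_a_pM1].
case: ifP => // /dvdnP [q def_a]; exfalso.
move: lt_pM_a le_a_pM1; rewrite def_a [(q * p)%N]mulnC.
change ((p * M) < p * q)%N with ((p * M).+1 <= p * q)%N.
rewrite !ltn_pmul2l //; lia.
Qed.

Lemma big_nat_ndvd M :
  \sum_(1 <= a < (p * M).+1 | ~~ (p %| a)%N) g a =
  \sum_(1 <= a < (p * M).+1) g a - \sum_(1 <= b < M.+1) g (p * b)%N.
Proof.
rewrite -big_nat_dvd [X in X - _](bigID (fun a => (p %| a)%N)) /=.
by rewrite addrC addrK.
Qed.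

End MultiplesSplit.

Section PAdicLimit.
Variables (p f n : nat) (chi : nat -> algC) (E : nat -> algC).
Hypotheses (p_prime : prime p) (p_odd : odd p) (chi_dirichlet : dirichlet_char f chi)
  (f_odd : odd f) (E_euler : gen_euler f chi E).

Lemma p_integral_chi a : p_integral p (chi a).
Proof. exact/p_integral_Aint/(chi_Aint chi_dirichlet). Qed.

Lemma p_integral_natX m k : p_integral p (m%:R ^+ k).
Proof. by rewrite -natrX; apply: p_integral_nat. Qed.

(* Solving the defining identity for E k only divides by 2. *)
Lemma p_integral_euler k : p_integral p (E k).
Proof.
elim/ltn_ind: k => k IHk.
have := E_euler k; rewrite big_ord_recr /= binn subnn expr0 mulr1 mul1r.
set lower := \sum_(i < k) _; set G := \sum_(_ <= _ < _) _ => E_k_eq.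
have -> : E k = G - 2^-1 * lower.
  by apply: (mulfI (_ : 2 != 0)); [rewrite pnatr_eq0 | rewrite mulrBr -E_k_eq; field].
apply: p_integralB.
  apply: p_integral_sum => a _.
  by apply/p_integralM/p_integral_natX/p_integralM/p_integral_chi;
    apply/p_integral_Aint/rpredX; rewrite rpredN rpred1.
apply/p_integralM/p_integral_sum; first exact: p_integral_inv2.
move=> i _; apply/p_integralM/IHk => //.
exact/p_integralM/p_integral_natX/p_integral_nat.
Qed.

Lemma p_integral_euler_tail M K : (K <= M)%N ->
  p_integral p (euler_tail f n E (p ^ M) / p%:R ^+ K).
Proof.
move=> le_KM; rewrite mulr_suml; apply: p_integral_sum => k _.
have le_K_Mnk : (K <= M * (n - k))%N.
  by rewrite (leq_trans le_KM) // leq_pmulr // subn_gt0.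
have p_neq0 : p%:R != 0 :> algC by rewrite pnatr_eq0 -lt0n prime_gt0.
have -> : ('C(n, k))%:R * E k * ((f * p ^ M)%:R) ^+ (n - k) / p%:R ^+ K =
          ('C(n, k))%:R * E k * (f%:R ^+ (n - k) * p%:R ^+ (M * (n - k) - K)).
  rewrite natrM exprMn natrX -exprM -(subnKC le_K_Mnk) exprD addKn.
  by field; rewrite expf_neq0.
by apply/p_integralM/p_integralM/p_integral_natX/p_integral_natX;
  [apply/p_integralM/p_integral_euler/p_integral_nat].
Qed.

Lemma padic_lim_alt_sum :
  padic_lim p (fun M => alt_sum n chi (f * p ^ M)) (E n).
Proof.
move=> K; exists K => M le_KM.
rewrite alt_sum_mulf_odd ?oddX ?p_odd ?orbT // -mulrA.
exact/p_integralM/p_integral_euler_tail/le_KM/p_integral_inv2.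
Qed.

Lemma alt_sum_ndvd N :
  \sum_(1 <= a < (f * p ^ N.+1).+1 | ~~ (p %| a)%N) (-1) ^+ a * chi a * a%:R ^+ n =
  alt_sum n chi (f * p ^ N.+1) - chi p * p%:R ^+ n * alt_sum n chi (f * p ^ N).
Proof.
have [_ chiM _ _] := chi_dirichlet.
rewrite expnS mulnCA big_nat_ndvd ?prime_gt0 // mulr_sumr.
congr (_ - _); apply: eq_bigr => b _.
by rewrite exprM -signr_odd p_odd expr1 chiM natrM exprMn; ring.
Qed.

End PAdicLimit.

Theorem corollary2p2 (p f : nat) (chi : nat -> algC) (E : nat -> algC) (n : nat) :
  prime p -> odd p -> (0 < f)%N -> odd f ->
  primitive_char f chi -> gen_euler f chi E ->
  padic_lim p
    (fun N : nat => \sum_(1 <= a < (f * p ^ N).+1 | ~~ (p %| a)%N)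
                      (-1) ^+ a * chi a * (a%:R) ^+ n)
    ((1 - chi p * (p%:R) ^+ n) * E n).
Proof.
move=> p_prime p_odd _ f_odd [chi_dirichlet _] E_euler.
set c := chi p * p%:R ^+ n.
have alt_sum_lim := padic_lim_alt_sum n p_prime p_odd chi_dirichlet f_odd E_euler.
apply: (padic_lim_eq_ge (N1 := 1)
  (v := fun N => alt_sum n chi (f * p ^ N) - c * alt_sum n chi (f * p ^ N.-1))).
  by case=> // N _; rewrite alt_sum_ndvd.
rewrite mulrBl mul1r; apply: padic_limB => //.
apply: padic_limMl; last exact: padic_lim_pred alt_sum_lim.
exact/p_integralM/p_integral_natX/(p_integral_chi _ chi_dirichlet).
Qed.
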